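(* Let $\varphi$ be a 3SAT formula on variables $x_1,\dots,x_n$ in which every clause consists of exactly three literals on three distinct variables, and let $(X,\mathcal{F})$ be the game hypergraph constructed from $\varphi$ as described in the context. Then, in the strict Avoider-Enforcer game on $(X,\mathcal{F})$ in which Enforcer makes the first move, Avoider has a winning strategy if and only if $\varphi$ is satisfiable. (Note that $|X|=4n$ and every losing set has at most six elements.)
   Context: A (strict) Avoider-Enforcer game is given by a finite set $X$ (the board) and a family $\mathcal{F}$ of subsets of $X$ (the losing sets). Two players, Avoider and Enforcer, alternately claim one previously unclaimed element of $X$ per move until all elements of $X$ are claimed. Enforcer wins if Avoider has claimed all elements of some losing set $f\in\mathcal{F}$; otherwise Avoider wins. Construction from a 3SAT formula $\varphi$ on variables $x_1,\dots,x_n$ (each clause having exactly three literals on three distinct variables): the board is $X=\bigcup_{i=1}^n\{a_i,s_i,x_i,\overline{x_i}\}$, consisting of $4n$ distinct vertices; the set $B_i=\{a_i,s_i,x_i,\overline{x_i}\}$ is called box $i$. The vertices $x_i,\overline{x_i}$ are identified with the literals $x_i,\overline{x_i}$ of $\varphi$. The family $\mathcal{F}$ consists of (1) for each $i$, all four 3-element subsets of $B_i$; and (2) for each clause $C=\ell_i\lor\ell_j\lor\ell_k$ of $\varphi$, where $\ell_h\in\{x_h,\overline{x_h}\}$ for $h=i,j,k$, the set $L_C=\{s_i,s_j,s_k,\overline{\ell_i},\overline{\ell_j},\overline{\ell_k}\}$, where $\overline{\ell}$ denotes the negation of literal $\ell$ (with $\overline{\overline{x_h}}=x_h$). *)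

From mathcomp Require Import all_boot.
Set Implicit Arguments. Unset Strict Implicit. Unset Printing Implicit Defensive.

Section Game.
Variable X : finType.
Variable F : {set {set X}}.

(* This is the usual backward-induction (alternating quantifier) characterization
   of the existence of a winning strategy in a finite perfect-information game. *)
Fixpoint avoider_wins_from (k : nat) (A E : {set X}) (enf_turn : bool) : bool :=
  match k with
  | 0 => ~~ [exists f in F, f \subset A]
  | k'.+1 =>
      if enf_turn then
        [forall x in ~: (A :|: E), avoider_wins_from k' A (x |: E) false]
      else
        [exists x in ~: (A :|: E), avoider_wins_from k' (x |: A) E true]
  end.

Definition avoider_wins_enforcer_first : bool :=
  avoider_wins_from #|X| set0 set0 true.
End Game.

(* A literal on variables x_0..x_{n-1}: (i, true) is x_i, (i, false) is ~x_i. *)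
Definition literal (n : nat) := ('I_n * bool)%type.
Definition lit_neg n (l : literal n) : literal n := (l.1, ~~ l.2).

Definition clause (n : nat) := (3.-tuple (literal n))%type.
Definition clause_ok n (C : clause n) : bool := uniq (map fst C).

Definition lit_true n (v : 'I_n -> bool) (l : literal n) : bool := v l.1 == l.2.
Definition satisfiable n (phi : seq (clause n)) : Prop :=
  exists v : 'I_n -> bool, all (fun C : clause n => has (lit_true v) C) phi.

(* vertex (i, k): k = 0 -> a_i, 1 -> s_i, 2 -> x_i, 3 -> ~x_i *)
Definition board (n : nat) := ('I_n * 'I_4)%type.
Definition ord4_0 : 'I_4 := @Ordinal 4 0 isT.
Definition ord4_1 : 'I_4 := @Ordinal 4 1 isT.
Definition ord4_2 : 'I_4 := @Ordinal 4 2 isT.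
Definition ord4_3 : 'I_4 := @Ordinal 4 3 isT.
Definition vtx_a n (i : 'I_n) : board n := (i, ord4_0).
Definition vtx_s n (i : 'I_n) : board n := (i, ord4_1).
Definition vtx_lit n (l : literal n) : board n := (l.1, if l.2 then ord4_2 else ord4_3).

Definition box n (i : 'I_n) : {set board n} :=
  [set vtx_a i; vtx_s i; vtx_lit (i, true); vtx_lit (i, false)].

Definition clause_set n (C : clause n) : {set board n} :=
  [set vtx_s l.1 | l in C] :|: [set vtx_lit (lit_neg l) | l in C].

Definition game_family n (phi : seq (clause n)) : {set {set board n}} :=
  [set S : {set board n} | [exists i : 'I_n, (S \subset box i) && (#|S| == 3)]]
  :|: [set clause_set C | C in phi].

From mathcomp Require Import all_boot zify.
Set Implicit Arguments. Unset Strict Implicit. Unset Printing Implicit Defensive.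

(* If an assignment v satisfies phi, Avoider answers every move of Enforcer by its partner
   in a perfect matching of the board: in box i, a_i is matched with the literal vertex made
   true by v and s_i with the other one.  Avoider never owns a matched pair, whereas every
   3-subset of a box and every clause set L_C contains one (s_j together with the negation of
   a literal of C that is true under v).
   Conversely, Enforcer opens the boxes one after the other by taking a_i.  Owning three
   vertices of a box wins for Enforcer: Avoider ends with 2n vertices and at most one of them
   in that box, hence with three vertices of another box.  So Avoider must reply inside box i,
   and after Enforcer's next move there she must take the last vertex of the box; she ends
   with s_i and one literal vertex of every box.  These literals define an assignment, and a
   clause it falsifies would have its set L_C entirely in Avoider's hands. *)

Section Game.
Variables (X : finType) (F : {set {set X}}).
Local Notation win := (avoider_wins_from F).

Definition free (A E : {set X}) : {set X} := ~: (A :|: E).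

Lemma free_claimE (A E : {set X}) x : free A (x |: E) = free A E :\ x.
Proof. by apply/setP=> p; rewrite !inE; case: (p == x); rewrite ?orbT ?andbF. Qed.

Lemma free_claimA (A E : {set X}) x : free (x |: A) E = free A E :\ x.
Proof. by apply/setP=> p; rewrite !inE; case: (p == x). Qed.

Lemma card_claim (S : {set X}) x k : x \in S -> #|S| = k.+1 -> #|S :\ x| = k.
Proof. by move=> Sx; rewrite (cardsD1 x S) Sx add1n => -[]. Qed.

Lemma disjoint_claim (A E : {set X}) x :
  x \in free A E -> [disjoint A & E] -> [disjoint A & x |: E] /\ [disjoint x |: A & E].
Proof.
rewrite !inE negb_or => /andP[xA xE] dAE.
split; apply/pred0P=> p /=; rewrite !inE; case: eqP => [->|_];
  rewrite ?(negbTE xA) ?(negbTE xE) //=;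
  by case: (boolP (p \in A)) => // /(disjointFr dAE) ->.
Qed.

(* Enforcer moves first, so he owns one more vertex than Avoider exactly when Avoider is to
   move. *)
Definition position k (A E : {set X}) (enf_turn : bool) :=
  [/\ [disjoint A & E], #|free A E| = k & #|E| = #|A| + ~~ enf_turn].

Definition winning_position k (A E : {set X}) enf_turn :=
  position k A E enf_turn /\ win k A E enf_turn.

Lemma position_start : position #|X| set0 set0 true.
Proof.
split; rewrite ?cards0 //; first by rewrite -setI_eq0 set0I.
by rewrite /free setU0 setC0 cardsT.
Qed.

Lemma position_card k A E t : position k A E t -> #|A| + #|E| + k = #|X|.
Proof.
case=> dAE <- _; rewrite -(cardsC (A :|: E)).
by have := leq_card_setU A E; rewrite dAE => -[_ /eqP ->].
Qed.

Lemma winning_enforcer_move k A E x :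
  winning_position k.+1 A E true -> x \in free A E -> winning_position k A (x |: E) false.
Proof.
move=> [[dAE kAE eAE] W] xF; have [dAxE _] := disjoint_claim xF dAE.
split; last by move: W => /= /forallP /(_ x) /implyP; apply.
split=> //; first by rewrite free_claimE; apply: card_claim.
by move: xF; rewrite cardsU1 eAE !inE negb_or => /andP[_ ->]; lia.
Qed.

Lemma winning_avoider_move k A E :
  winning_position k.+1 A E false ->
  exists2 y, y \in free A E & winning_position k (y |: A) E true.
Proof.
move=> [[dAE kAE eAE] /= /existsP[y /andP[yF W]]]; exists y => //.
have [_ dyAE] := disjoint_claim yF dAE.
split=> //; split=> //; first by rewrite free_claimA; apply: card_claim.
by move: yF; rewrite cardsU1 eAE !inE negb_or => /andP[-> _]; lia.
Qed.

Lemma winning_final_set k A E t : winning_position k A E t ->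
  exists A' : {set X},
    [/\ [disjoint A' & E], #|A'| = #|X|./2 & ~~ [exists f in F, f \subset A']].
Proof.
elim: k A E t => [|k IH] A E t.
  move=> [P W]; exists A; split=> //; first by case: P.
  have := position_card P; case: P => _ _; case: t {W} => /= ->; lia.
case: t => WP; last first.
  by have [y _ /IH] := winning_avoider_move WP.
have : 0 < #|free A E| by case: WP => -[_ -> _].
rewrite card_gt0 => /set0Pn[x xF].
have [A' [dA'xE cardA' noF]] := IH _ _ _ (winning_enforcer_move WP xF).
exists A'; split=> //; apply: disjointWr dA'xE; exact: subsetUr.
Qed.

End Game.

Section Pairing.
Variables (X : finType) (F : {set {set X}}) (partner : X -> X).
Hypothesis partnerK : involutive partner.
Hypothesis partner_neq : forall p, partner p != p.

Lemma pair_in_large_subset (S B : {set X}) :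
  S \subset B -> {in B, forall p, partner p \in B} -> #|B| < #|S|.*2 ->
  exists2 p, p \in S & partner p \in S.
Proof.
move=> sSB BP ltB; have injP := can_inj partnerK.
have : S :|: partner @: S \subset B.
  rewrite subUset sSB; apply/subsetP=> _ /imsetP[p Sp ->].
  by apply/BP/(subsetP sSB).
move/subset_leq_card; rewrite cardsU card_imset // => leB.
have /set0Pn[q /setIP[Sq /imsetP[p Sp Eq]]] : S :&: partner @: S != set0.
  by apply: contraTneq leB => ->; rewrite cards0; lia.
by exists p; rewrite // -Eq.
Qed.

Hypothesis F_has_pair : forall f, f \in F -> exists2 p, p \in f & partner p \in f.

Lemma pairfree_avoids (A : {set X}) :
  (forall p, p \in A -> partner p \notin A) -> ~~ [exists f in F, f \subset A].
Proof.
move=> pairfree; apply/existsP=> -[f /andP[/F_has_pair[p fp fpp] sfA]].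
by have /negP := pairfree p (subsetP sfA p fp); apply; apply: (subsetP sfA).
Qed.

Lemma pairing_strategy_wins_from k (A E : {set X}) :
  #|free A E| = k -> [disjoint A & E] -> (forall p, (p \in A) = (partner p \in E)) ->
  avoider_wins_from F k A E true.
Proof.
elim/ltn_ind: k A E => -[|k] IH A E kAE dAE AE /=.
  by apply: pairfree_avoids => p Ap; rewrite AE partnerK (disjointFr dAE Ap).
apply/forallP=> x; apply/implyP=> xF.
have [dAxE _] := disjoint_claim xF dAE.
have pxF : partner x \in free A (x |: E).
  move: xF; rewrite free_claimE in_setD1 partner_neq !inE.
  by rewrite (AE (partner x)) partnerK -(AE x) orbC.
have kAxE : #|free A (x |: E)| = k by rewrite free_claimE; apply: card_claim.
case: k IH kAE kAxE => [|k] IH kAE kAxE; first by rewrite (cards0_eq kAxE) inE in pxF.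
apply/existsP; exists (partner x); rewrite pxF /=; apply: (IH k) => //.
- by rewrite free_claimA; apply: card_claim.
- by have [] := disjoint_claim pxF dAxE.
- by move=> p; rewrite !inE AE (can2_eq partnerK partnerK).
Qed.

Lemma pairing_strategy_wins : avoider_wins_enforcer_first F.
Proof.
have [d0 free0 _] := position_start X.
by apply: pairing_strategy_wins_from => // p; rewrite !inE.
Qed.

End Pairing.

Lemma ord4_cases (k : 'I_4) : [\/ k = ord4_0, k = ord4_1, k = ord4_2 | k = ord4_3].
Proof.
case: k => [[|[|[|[|k]]]] lt_k4] //.
- by constructor 1; apply: val_inj.
- by constructor 2; apply: val_inj.
- by constructor 3; apply: val_inj.
- by constructor 4; apply: val_inj.
Qed.

Section Board.
Variables (n : nat) (phi : seq (clause n)).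
Local Notation FF := (game_family phi).

Lemma boxE (i : 'I_n) : box i = [set p : board n | p.1 == i].
Proof.
apply/setP=> -[j k]; rewrite !inE /vtx_a /vtx_s /vtx_lit /= !xpair_eqE.
by case: (j == i) => //=; case: (ord4_cases k) => ->.
Qed.

Lemma card_box (i : 'I_n) : #|box i| = 4.
Proof.
have inj_i : injective (pair i : 'I_4 -> board n) by move=> k k' [].
rewrite boxE -[RHS](card_ord 4) -(card_imset _ inj_i).
apply: eq_card=> -[j k]; rewrite inE /=.
by apply/eqP/imsetP=> [-> | [k' _ [-> _]]]; first by exists k.
Qed.

Lemma card_board : #|{: board n}| = n * 4.
Proof. by rewrite card_prod !card_ord. Qed.

Lemma card_sum_boxes (S : {set board n}) : #|S| = \sum_(i < n) #|S :&: box i|.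
Proof.
rewrite -sum1_card (partition_big (fun p : board n => p.1) xpredT) //=.
by apply: eq_bigr => i _; rewrite -sum1_card; apply: eq_bigl => p; rewrite boxE !inE.
Qed.

Lemma box_pigeonhole (S : {set board n}) (i : 'I_n) :
  #|S| = n.*2 -> #|S :&: box i| <= 1 -> exists j, 2 < #|S :&: box j|.
Proof.
move=> cardS le1; apply/existsP; apply: contraT; rewrite negb_exists => /forallP le2.
have : \sum_(j < n) #|S :&: box j| < \sum_(j < n) 2.
  rewrite (bigD1 i) // [X in _ < X](bigD1 i) //= -addSn leq_add ?ltnS //.
  by apply: leq_sum => j _; rewrite leqNgt le2.
by rewrite -card_sum_boxes sum_nat_const card_ord cardS; lia.
Qed.

Lemma box_triple_losing (A : {set board n}) (i : 'I_n) :
  2 < #|A :&: box i| -> [exists f in FF, f \subset A].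
Proof.
move=> gt2; apply/existsP; exists [set p in take 3 (enum (A :&: box i))].
have sub : [set p in take 3 (enum (A :&: box i))] \subset A :&: box i.
  by apply/subsetP=> p; rewrite inE => /mem_take; rewrite mem_enum.
rewrite (subset_trans sub (subsetIl _ _)) andbT !inE; apply/orP; left.
apply/existsP; exists i; rewrite (subset_trans sub (subsetIr _ _)) cardsE /=.
by rewrite (card_uniqP _) ?take_uniq ?enum_uniq // size_takel // -cardE.
Qed.

Lemma enforcer_owns_box_triple k (A E : {set board n}) t (i : 'I_n) :
  winning_position FF k A E t -> 2 < #|E :&: box i| -> False.
Proof.
move=> /winning_final_set[A' [dA'E cardA' noF]] gt2.
have le1 : #|A' :&: box i| <= 1.
  have : #|(A' :&: box i) :|: (E :&: box i)| <= 4.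
    by rewrite -[X in _ <= X](card_box i) subset_leq_card // subUset !subsetIr.
  by rewrite cardsU setIACA (disjoint_setI0 dA'E) set0I cards0; lia.
have [|j /box_triple_losing] := box_pigeonhole _ le1; first by rewrite cardA' card_board; lia.
by rewrite (negbTE noF).
Qed.

Lemma enforcer_completes_triple k (A E : {set board n}) (i : 'I_n) a x w :
  winning_position FF k A E true -> a \in E :&: box i -> x \in E :&: box i -> a != x ->
  w \in free A E :&: box i -> False.
Proof.
move=> WP aEi xEi ax /setIP[wF wi].
have k_gt0 : 0 < k by case: WP => -[_ <- _] _; apply/card_gt0P; exists w.
case: k k_gt0 WP => // k _ /winning_enforcer_move/(_ wF) WP.
apply: (enforcer_owns_box_triple (i := i) WP).
have wE : w \notin E by move: wF; rewrite !inE negb_or => /andP[].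
have Eiax : [set a; x] \subset E :&: box i by rewrite subUset !sub1set aEi.
rewrite setIUl (setIidPl _) ?sub1set // cardsU1 inE (negPf wE) /= ltnS.
by move: (subset_leq_card Eiax); rewrite cards2 ax.
Qed.

Lemma avoider_forced_reply k (A E : {set board n}) (i : 'I_n) a x r :
  winning_position FF k.+2 A E true -> a \in E :&: box i ->
  x \in free A E :&: box i -> r \in free A E :&: box i -> x != r ->
  winning_position FF k (r |: A) (x |: E) true.
Proof.
move=> WP /setIP[aE ai] /setIP[xF xi] /setIP[rF ri] xr.
have [z zF WPz] := winning_avoider_move (winning_enforcer_move WP xF).
have [<- //|zr] := eqVneq z r.
have aF : a \notin free A E by rewrite !inE aE orbT.
exfalso; apply: (enforcer_completes_triple (i := i) (a := a) (x := x) (w := r) WPz).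
- by rewrite in_setI in_setU1 aE orbT ai.
- by rewrite in_setI in_setU1 eqxx xi.
- by apply: contraNneq aF => ->.
- by rewrite in_setI free_claimA free_claimE !in_setD1 eq_sym zr (eq_sym r x) xr rF ri.
Qed.

Lemma vtx_neq (i : 'I_n) c :
  [/\ vtx_s i != vtx_a i, vtx_lit (i, c) != vtx_a i, vtx_lit (i, c) != vtx_s i
     & vtx_lit (i, c) != vtx_lit (i, ~~ c)].
Proof. by rewrite /vtx_a /vtx_s /vtx_lit !xpair_eqE eqxx; case: c. Qed.

Lemma box_vertices (i : 'I_n) c :
  [/\ vtx_a i \in box i, vtx_s i \in box i & vtx_lit (i, c) \in box i].
Proof. by rewrite !inE !eqxx ?orbT; case: c; rewrite eqxx !orbT. Qed.

Lemma avoider_replies_in_box k (A E : {set board n}) (i : 'I_n) y :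
  box i \subset free A E -> winning_position FF k.+2 (y |: A) (vtx_a i |: E) true ->
  y \in box i.
Proof.
move=> /subsetP fresh WP; case: (boolP (y \in box i)) => // yNi; exfalso.
have [ai si ti] := box_vertices i true; have [_ _ fi] := box_vertices i false.
have [sNa tNa _ tNf] := vtx_neq i true; have [_ fNa fNs _] := vtx_neq i false.
have free_reply p : p \in box i -> p != vtx_a i -> p \in free (y |: A) (vtx_a i |: E) :&: box i.
  move=> pi pa; rewrite in_setI free_claimA free_claimE !in_setD1 pa fresh // pi !andbT.
  by apply: contraNneq yNi => <-.
have aEi : vtx_a i \in (vtx_a i |: E) :&: box i by rewrite in_setI in_setU1 eqxx ai.
have WPl := avoider_forced_reply WP aEi (free_reply _ ti tNa) (free_reply _ fi fNa) tNf.
apply: (enforcer_completes_triple (i := i) (a := vtx_a i) (x := vtx_lit (i, true))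
  (w := vtx_s i) WPl).
- by rewrite in_setI !in_setU1 eqxx orbT ai.
- by rewrite in_setI in_setU1 eqxx ti.
- by rewrite eq_sym.
- have := free_reply _ si sNa.
  by rewrite !in_setI !free_claimA !free_claimE !in_setD1 !(eq_sym (vtx_s i)) fNs.
Qed.

Definition round_claims (G : 'I_n -> bool -> {set board n}) m (b : 'I_n -> bool) :=
  \bigcup_(i < n | i < m) G i (b i).

(* The position reached after Enforcer's strategy has been played on the boxes [i < m],
   Avoider having kept the literal [b i] of box [i]. *)
Definition avoider_claims := round_claims (fun i c => [set vtx_s i; vtx_lit (i, c)]).
Definition enforcer_claims := round_claims (fun i c => [set vtx_a i; vtx_lit (i, ~~ c)]).

Lemma round_claims_step G (i : 'I_n) b c :
  round_claims G i.+1 [eta b with i |-> c] = G i c :|: round_claims G i b.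
Proof.
rewrite /round_claims (bigD1 i) ?ltnSn //= eqxx; congr (_ :|: _).
apply: eq_big => [j | j /andP[_ /negPf ->]] //.
by rewrite ltnS leq_eqVlt -val_eqE /=; case: ltngtP.
Qed.

Lemma box_free_claims (i : 'I_n) b :
  box i \subset free (avoider_claims i b) (enforcer_claims i b).
Proof.
apply/subsetP=> p; rewrite boxE !inE => /eqP pi; rewrite negb_or.
by apply/andP; split; apply/bigcupP=> -[j /= lt_ji]; rewrite !inE => /orP[] /eqP pE;
  move: lt_ji; rewrite -pi pE ltnn.
Qed.

Lemma round_step (i : 'I_n) b k :
  winning_position FF k.+4 (avoider_claims i b) (enforcer_claims i b) true ->
  exists c, winning_position FF k (avoider_claims i.+1 [eta b with i |-> c])
                                  (enforcer_claims i.+1 [eta b with i |-> c]) true.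
Proof.
set A := avoider_claims i b; set E := enforcer_claims i b.
move=> WP; have fresh := box_free_claims i b.
have [ai si _] := box_vertices i true.
have [sNa tNa tNs tNf] := vtx_neq i true; have [_ fNa fNs fNt] := vtx_neq i false.
have li c : vtx_lit (i, c) \in box i by case: (box_vertices i c).
have [y yF WPy] := winning_avoider_move (winning_enforcer_move WP (subsetP fresh _ ai)).
have aEi : vtx_a i \in (vtx_a i |: E) :&: box i by rewrite in_setI in_setU1 eqxx ai.
have free_reply p : p \in box i -> p != y -> p != vtx_a i ->
    p \in free (y |: A) (vtx_a i |: E) :&: box i.
  by move=> pi py pa; rewrite in_setI free_claimA free_claimE !in_setD1 py pa (subsetP fresh).
have settle c x r : [set y; r] = [set vtx_s i; vtx_lit (i, c)] -> x = vtx_lit (i, ~~ c) ->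
    x \in free (y |: A) (vtx_a i |: E) :&: box i ->
    r \in free (y |: A) (vtx_a i |: E) :&: box i -> x != r ->
    exists c, winning_position FF k (avoider_claims i.+1 [eta b with i |-> c])
                                    (enforcer_claims i.+1 [eta b with i |-> c]) true.
  move=> yrE xE xF rF xr; exists c.
  rewrite /avoider_claims /enforcer_claims !round_claims_step -yrE -xE -!setUA.
  by rewrite [y |: _]setUCA [vtx_a i |: _]setUCA; apply: avoider_forced_reply WPy aEi xF rF xr.
move: (avoider_replies_in_box fresh WPy); rewrite !inE -!orbA => /or4P[] /eqP yE; subst y.
- by rewrite free_claimE !inE eqxx in yF.
- exact: (settle false _ _ erefl erefl
    (free_reply _ (li true) tNs tNa) (free_reply _ (li false) fNs fNa) tNf).
- apply: (settle true _ _ (setUC _ _) erefl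
    (free_reply _ (li false) fNt fNa) (free_reply _ si _ sNa) fNs).
  by rewrite eq_sym.
- apply: (settle false _ _ (setUC _ _) erefl
    (free_reply _ (li true) tNf tNa) (free_reply _ si _ sNa) tNs).
  by rewrite eq_sym.
Qed.

Lemma winning_rounds m : m <= n -> winning_position FF (n * 4) set0 set0 true ->
  exists b, winning_position FF ((n - m) * 4) (avoider_claims m b) (enforcer_claims m b) true.
Proof.
move=> + WP0; elim: m => [_ | m IH lt_mn].
  exists (fun=> true); rewrite subn0 /avoider_claims /enforcer_claims /round_claims.
  by rewrite !big_pred0.
have [b WP] := IH (ltnW lt_mn).
rewrite (_ : (n - m) * 4 = ((n - m.+1) * 4).+4) in WP; last by lia.
have [c WPc] := round_step (i := Ordinal lt_mn) WP.
by exists [eta b with Ordinal lt_mn |-> c].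
Qed.

Lemma unsat_claims_lose b : ~~ all (fun C : clause n => has (lit_true b) C) phi ->
  [exists f in FF, f \subset avoider_claims n b].
Proof.
case/allPn=> C phiC /hasPn Cfalse; apply/existsP; exists (clause_set C).
rewrite inE (imset_f _ phiC) orbT /=; apply/subsetP=> p.
rewrite inE => /orP[] /imsetP[l Cl ->]; apply/bigcupP; exists l.1 => //=; rewrite !inE.
- by rewrite eqxx.
- have /negPf := Cfalse l Cl; rewrite /lit_true /lit_neg /=.
  by case: (b l.1); case: l.2; rewrite eqxx ?orbT.
Qed.

Lemma winning_satisfiable : avoider_wins_enforcer_first FF -> satisfiable phi.
Proof.
move=> W; have WP0 : winning_position FF (n * 4) set0 set0 true.
  by rewrite -card_board; split; [apply: position_start | apply: W].
have [b [_ Wn]] := winning_rounds (leqnn n) WP0; rewrite subnn /= in Wn.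
by exists b; apply: contraNT Wn => /unsat_claims_lose.
Qed.

End Board.

Section Satisfiable.
Variables (n : nat) (phi : seq (clause n)) (v : 'I_n -> bool).
Hypothesis v_sat : all (fun C : clause n => has (lit_true v) C) phi.

Definition partner (p : board n) : board n :=
  let i := p.1 in
  if p == vtx_a i then vtx_lit (i, v i) else if p == vtx_lit (i, v i) then vtx_a i
  else if p == vtx_s i then vtx_lit (i, ~~ v i) else vtx_s i.

Lemma partnerK : involutive partner.
Proof.
move=> [i k]; case: (ord4_cases k) => ->; case vi: (v i);
  by rewrite /partner /vtx_a /vtx_s /vtx_lit;
     do ?[rewrite eqxx /= | rewrite vi /= | rewrite xpair_eqE /=].
Qed.

Lemma partner_neq p : partner p != p.
Proof.
case: p => i k; case: (ord4_cases k) => ->; case vi: (v i);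
  by rewrite /partner /vtx_a /vtx_s /vtx_lit;
     do ?[rewrite eqxx /= | rewrite vi /= | rewrite xpair_eqE /=].
Qed.

Lemma partner_box (i : 'I_n) : {in box i, forall p, partner p \in box i}.
Proof.
move=> p; rewrite !boxE !inE => /eqP <-; rewrite /partner.
by case: ifP => _; [|case: ifP => _; [|case: ifP]].
Qed.

Lemma game_family_has_pair f :
  f \in game_family phi -> exists2 p, p \in f & partner p \in f.
Proof.
rewrite !inE => /orP[/existsP[i /andP[sfi /eqP card3]] | /imsetP[C phiC ->]].
  by apply: (pair_in_large_subset partnerK sfi (@partner_box i)); rewrite card3 card_box.
have /hasP[l Cl /eqP vl] := allP v_sat C phiC.
exists (vtx_s l.1); first by rewrite inE (imset_f _ Cl).
have -> : partner (vtx_s l.1) = vtx_lit (lit_neg l).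
  by rewrite /partner /vtx_a /vtx_s /vtx_lit /lit_neg /= !xpair_eqE eqxx vl; case: l.2.
by rewrite inE (imset_f _ Cl) orbT.
Qed.

End Satisfiable.

Theorem mainTheorem2 (n : nat) (phi : seq (clause n)) :
  all (@clause_ok n) phi ->
  (avoider_wins_enforcer_first (game_family phi) <-> satisfiable phi).
Proof.
move=> _; split; first exact: winning_satisfiable.
case=> v v_sat; apply: (pairing_strategy_wins (partnerK v) (partner_neq v)).
exact: game_family_has_pair.
Qed.
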